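(* The series below converge and $$\sum_{n=0}^{\infty}\left(e^{-1}n!-D_n\right)=e^{-1}\int_0^{-1}\frac{e^{-t}}{1-t}\,dt=e^{-1}\sum_{n=0}^{\infty}D_n\frac{(-1)^{n+1}}{(n+1)!}.$$
   Context: $D_n=n!\sum_{k=0}^{n}\frac{(-1)^k}{k!}$ are the derangement numbers ($n\ge0$). Note $e^{-1}n!-D_n=n!\left(e^{-1}-\sum_{k=0}^n\frac{(-1)^k}{k!}\right)$. *)

From Stdlib Require Import Reals.
From Coquelicot Require Import Coquelicot.
Open Scope R_scope.

Definition derangement (n : nat) : R :=
  INR (Factorial.fact n) * sum_f_R0 (fun k => (-1) ^ k / INR (Factorial.fact k)) n.

(* Writing [T x n] for the Taylor polynomial of [exp] of degree [n], one has
   [int_0^x t^n e^(-t) dt = n! (1 - e^(-x) T x n)] (integration by parts).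
   Since [D_n = n! T (-1) n], at [x = -1] this says
   [e^(-1) n! - D_n = e^(-1) int_0^(-1) t^n e^(-t) dt], so the partial sums of the
   first series are [e^(-1) int_0^(-1) e^(-t) (1 - t^(N+1)) / (1 - t) dt].  For the
   second series, [D_n (-1)^(n+1) / (n+1)! = T (-1) n int_0^(-1) t^n dt], and the
   partial sums integrate the truncated Cauchy product of [e^(-t)] and [1/(1-t)].
   In both cases the integrand differs from [e^(-t)/(1-t)] by [O(|t|^(N+1))] on
   [[-1,0]], whose integral is [O(1/N)]. *)
From Stdlib Require Import Reals Lra.
From Coquelicot Require Import Coquelicot.
Open Scope R_scope.

Definition exp_taylor (x : R) (n : nat) : R :=
  sum_f_R0 (fun k => x ^ k / INR (Factorial.fact k)) n.

Definition derangement_egf (t : R) : R := exp (- t) / (1 - t).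

Lemma derangement_exp_taylor n : derangement n = INR (Factorial.fact n) * exp_taylor (-1) n.
Proof. reflexivity. Qed.

Lemma continuous_of_ex_derive (f : R -> R) x : ex_derive f x -> continuous f x.
Proof. exact (@ex_derive_continuous R_AbsRing R_NormedModule f x). Qed.

Lemma exp_le_3_of_le_1 y : y <= 1 -> exp y <= 3.
Proof.
  intros Hy. apply Rle_trans with (exp 1); [|exact exp_le_3].
  destruct (Req_dec y 1) as [->|Hne]; [lra|]. left. apply exp_increasing. lra.
Qed.

Lemma ex_RInt_of_ex_derive (f : R -> R) a b :
  (forall x, Rmin a b <= x <= Rmax a b -> ex_derive f x) -> ex_RInt f a b.
Proof.
  intros Hf. apply (@ex_RInt_continuous R_CompleteNormedModule).
  intros x Hx. apply continuous_of_ex_derive, Hf, Hx.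
Qed.

Lemma is_RInt_pow x n : is_RInt (fun t => t ^ n) 0 x (x ^ S n / INR (S n)).
Proof.
  assert (Hn : INR (S n) <> 0) by (apply not_0_INR; discriminate).
  replace (x ^ S n / INR (S n)) with (minus (x ^ S n / INR (S n)) (0 ^ S n / INR (S n)))
    by (unfold minus, plus, opp; simpl; field; exact Hn).
  apply (is_RInt_derive (fun t => t ^ S n / INR (S n))).
  - intros t _. auto_derive; [auto|].
    change (match n with 0%nat => 1 | S _ => INR n + 1 end) with (INR (S n)).
    cbn [pow]. field. exact Hn.
  - intros t _. apply continuous_of_ex_derive. auto_derive. auto.
Qed.

Lemma is_RInt_opp_pow n : is_RInt (fun t => (- t) ^ n) (-1) 0 (/ INR (S n)).
Proof.
  assert (Hn : INR (S n) <> 0) by (apply not_0_INR; discriminate).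
  replace (/ INR (S n))
    with (minus (- (- 0) ^ S n / INR (S n)) (- (- -1) ^ S n / INR (S n)))
    by (unfold minus, plus, opp; simpl;
        replace (- -1) with 1 by ring; rewrite pow1; field; exact Hn).
  apply (is_RInt_derive (fun t => - (- t) ^ S n / INR (S n))).
  - intros t _. auto_derive; [auto|].
    change (match n with 0%nat => 1 | S _ => INR n + 1 end) with (INR (S n)).
    cbn [pow]. field. exact Hn.
  - intros t _. apply continuous_of_ex_derive. auto_derive. auto.
Qed.

Lemma is_RInt_sum_n (f : nat -> R -> R) (I : nat -> R) a b :
  (forall n, is_RInt (f n) a b (I n)) ->
  forall N, is_RInt (fun t => sum_n (fun n => f n t) N) a b (sum_n I N).
Proof.
  intros Hf N. induction N as [|N IH].
  - rewrite sum_O. apply (is_RInt_ext (f 0%nat)); [intros t _; now rewrite sum_O | apply Hf].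
  - rewrite sum_Sn.
    apply (is_RInt_ext (fun t => plus (sum_n (fun n => f n t) N) (f (S N) t))).
    + intros t _. now rewrite sum_Sn.
    + exact (is_RInt_plus _ _ _ _ _ _ IH (Hf (S N))).
Qed.

(** * The incomplete gamma identity and the Taylor remainder of [exp] *)

Lemma is_RInt_pow_exp_opp x n :
  is_RInt (fun t => t ^ n * exp (- t)) 0 x
    (INR (Factorial.fact n) * (1 - exp (- x) * exp_taylor x n)).
Proof.
  induction n as [|n IH].
  - replace (INR (Factorial.fact 0) * (1 - exp (- x) * exp_taylor x 0))
      with (minus (- exp (- x)) (- exp (- 0)))
      by (unfold minus, plus, opp, exp_taylor; simpl; rewrite Ropp_0, exp_0; field).
    apply (is_RInt_derive (fun t => - exp (- t))).
    + intros t _. auto_derive; [auto|]. simpl. ring.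
    + intros t _. apply continuous_of_ex_derive. auto_derive. auto.
  - set (G t := t ^ S n * exp (- t)).
    set (dG t := INR (S n) * (t ^ n * exp (- t)) - G t).
    assert (HdG : is_RInt dG 0 x (minus (G x) (G 0))).
    { apply (is_RInt_derive G).
      - intros t _. unfold G, dG. auto_derive; [auto|].
        change (match n with 0%nat => 1 | S _ => INR n + 1 end) with (INR (S n)).
        unfold G. cbn [pow]. ring.
      - intros t _. apply continuous_of_ex_derive. unfold dG, G. auto_derive. auto. }
    (* [t^(n+1) e^(-t) = (n+1) t^n e^(-t) - G'(t)]: integration by parts. *)
    assert (H := is_RInt_minus _ _ _ _ _ _ (is_RInt_scal _ _ _ (INR (S n)) _ IH) HdG).
    replace (INR (Factorial.fact (S n)) * (1 - exp (- x) * exp_taylor x (S n)))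
      with (minus (scal (INR (S n)) (INR (Factorial.fact n) * (1 - exp (- x) * exp_taylor x n)))
              (minus (G x) (G 0))).
    + eapply is_RInt_ext; [|exact H]. intros t _.
      unfold dG, G, minus, plus, opp, scal; simpl; unfold mult; simpl. ring.
    + change (exp_taylor x (S n)) with (exp_taylor x n + x ^ S n / INR (Factorial.fact (S n))).
      rewrite fact_simpl, mult_INR, S_INR.
      assert (Hf := INR_fact_neq_0 n).
      assert (Hs : INR n + 1 <> 0) by (rewrite <- S_INR; apply not_0_INR; discriminate).
      unfold G, minus, plus, opp, scal; simpl; unfold mult; simpl.
      field. split; assumption.
Qed.

Lemma exp_taylor_remainder_bound x n :
  Rabs x <= 1 -> Rabs (exp x - exp_taylor x n) <= 9 * Rabs x ^ S n.
Proof.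
  intros Hx.
  assert (Hint : Rabs (INR (Factorial.fact n) * (1 - exp (- x) * exp_taylor x n))
                 <= Rabs (x - 0) * (Rabs x ^ n * 3)).
  { refine (norm_RInt_le_const_abs (V := R_NormedModule) _ _ _ _ _ _
              (is_RInt_pow_exp_opp x n)).
    intros t Ht. change (Rabs (t ^ n * exp (- t)) <= Rabs x ^ n * 3).
    assert (Htx : Rabs t <= Rabs x)
      by (unfold Rmin, Rmax in Ht; destruct Rle_dec; unfold Rabs; repeat destruct Rcase_abs; lra).
    rewrite Rabs_mult, <- RPow_abs, (Rabs_pos_eq (exp (- t))) by (left; apply exp_pos).
    apply Rmult_le_compat; try apply pow_le; try apply Rabs_pos; try (left; apply exp_pos).
    - apply pow_incr. split; [apply Rabs_pos | exact Htx].
    - apply exp_le_3_of_le_1. unfold Rabs in Htx, Hx; repeat destruct Rcase_abs; lra. }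
  assert (Hfact : 1 <= INR (Factorial.fact n)) by (apply (le_INR 1), Factorial.lt_O_fact).
  replace (exp x - exp_taylor x n) with (exp x * (1 - exp (- x) * exp_taylor x n))
    by (rewrite Rmult_minus_distr_l, <- Rmult_assoc, <- exp_plus, Rplus_opp_r, exp_0; ring).
  rewrite Rabs_mult, (Rabs_pos_eq (exp x)) by (left; apply exp_pos).
  rewrite Rminus_0_r, Rabs_mult, (Rabs_pos_eq (INR _)) in Hint by lra.
  assert (H3 : exp x <= 3) by (apply exp_le_3_of_le_1; unfold Rabs in Hx; destruct Rcase_abs in Hx; lra).
  pose proof (Rabs_pos (1 - exp (- x) * exp_taylor x n)).
  pose proof (pow_le (Rabs x) n (Rabs_pos x)). pose proof (Rabs_pos x).
  cbn [pow]. nra.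
Qed.

Lemma is_lim_seq_RInt (f : R -> R) (F w : nat -> R -> R) (s e : nat -> R) a b :
  ex_RInt f a b ->
  (forall N, is_RInt (F N) a b (s N)) ->
  (forall N x, Rmin a b <= x <= Rmax a b -> Rabs (f x - F N x) <= w N x) ->
  (forall N, is_RInt (w N) (Rmin a b) (Rmax a b) (e N)) ->
  is_lim_seq e 0 -> is_lim_seq s (RInt f a b).
Proof.
  intros Hf HF Hw He He0.
  assert (Hdist : forall N, Rabs (RInt f a b - s N) <= e N).
  { intros N.
    assert (Hd := is_RInt_minus _ _ _ _ _ _ (RInt_correct _ _ _ Hf) (HF N)).
    destruct (Rle_dec a b) as [Hab|Hba].
    - rewrite Rmin_left, Rmax_right in Hw, He by exact Hab.
      exact (norm_RInt_le (V := R_NormedModule) (fun x => minus (f x) (F N x)) (w N) a b _ _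
               Hab (Hw N) Hd (He N)).
    - rewrite Rmin_right, Rmax_left in Hw, He by lra.
      rewrite <- Rabs_Ropp.
      exact (norm_RInt_le (V := R_NormedModule) (fun x => minus (f x) (F N x)) (w N) b a _ _
               ltac:(lra) (Hw N) (is_RInt_swap _ _ _ _ Hd) (He N)). }
  assert (Hgap : is_lim_seq (fun N => RInt f a b - s N) 0).
  { apply is_lim_seq_abs_0, (is_lim_seq_le_le (fun _ => 0) _ e); [|apply is_lim_seq_const|exact He0].
    intros N. split; [apply Rabs_pos | apply Hdist]. }
  apply (is_lim_seq_ext (fun N => RInt f a b - (RInt f a b - s N))); [intros N; ring|].
  assert (H := is_lim_seq_minus' _ _ _ _ (is_lim_seq_const (RInt f a b)) Hgap).
  rewrite Rminus_0_r in H. exact H.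
Qed.

Lemma is_lim_seq_inv_INR_SS : is_lim_seq (fun N => / INR (S (S N))) 0.
Proof.
  assert (H : is_lim_seq (fun N => INR N + 2) p_infty).
  { apply (is_lim_seq_plus _ _ p_infty 2); [apply is_lim_seq_INR | apply is_lim_seq_const|].
    reflexivity. }
  apply (is_lim_seq_ext (fun N => / (INR N + 2))).
  - intros N. rewrite !S_INR. f_equal. ring.
  - exact (is_lim_seq_inv _ _ H ltac:(discriminate)).
Qed.

Lemma is_lim_seq_RInt_pow_error (f : R -> R) (F : nat -> R -> R) (s : nat -> R) C :
  ex_RInt f 0 (-1) ->
  (forall N, is_RInt (F N) 0 (-1) (s N)) ->
  (forall N t, -1 <= t <= 0 -> Rabs (f t - F N t) <= C * (- t) ^ S N) ->
  is_lim_seq s (RInt f 0 (-1)).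
Proof.
  intros Hf HF Herr.
  apply (is_lim_seq_RInt f F (fun N t => C * (- t) ^ S N) s (fun N => C * / INR (S (S N)))
           0 (-1) Hf HF); rewrite ?Rmin_right, ?Rmax_left by lra.
  - exact Herr.
  - intros N. exact (is_RInt_scal _ _ _ C _ (is_RInt_opp_pow (S N))).
  - assert (H := is_lim_seq_scal_l _ C _ is_lim_seq_inv_INR_SS).
    simpl in H. rewrite Rmult_0_r in H. exact H.
Qed.

(** * The first series *)

Lemma ex_RInt_derangement_egf : ex_RInt derangement_egf 0 (-1).
Proof.
  apply ex_RInt_of_ex_derive. intros t Ht. rewrite Rmin_right, Rmax_left in Ht by lra.
  unfold derangement_egf. auto_derive. lra.
Qed.

Lemma Rabs_derangement_egf_le t : -1 <= t <= 0 -> Rabs (derangement_egf t) <= 3.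
Proof.
  intros Ht. unfold derangement_egf, Rdiv.
  assert (He : exp (- t) <= 3) by (apply exp_le_3_of_le_1; lra).
  assert (Hinv : 0 < / (1 - t) <= 1).
  { split; [apply Rinv_0_lt_compat; lra|]. rewrite <- Rinv_1. apply Rinv_le_contravar; lra. }
  pose proof (exp_pos (- t)).
  rewrite Rabs_pos_eq by nra. nra.
Qed.

Lemma is_RInt_derangement_gap n :
  is_RInt (fun t => exp (-1) * (t ^ n * exp (- t))) 0 (-1)
    (exp (-1) * INR (Factorial.fact n) - derangement n).
Proof.
  replace (exp (-1) * INR (Factorial.fact n) - derangement n)
    with (exp (-1) * (INR (Factorial.fact n) * (1 - exp (- -1) * exp_taylor (-1) n))).
  - exact (is_RInt_scal _ _ _ _ _ (is_RInt_pow_exp_opp (-1) n)).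
  - rewrite derangement_exp_taylor.
    replace (exp (-1) * (INR (Factorial.fact n) * (1 - exp (- -1) * exp_taylor (-1) n)))
      with (exp (-1) * INR (Factorial.fact n)
            - exp (-1 + - -1) * INR (Factorial.fact n) * exp_taylor (-1) n)
      by (rewrite exp_plus; ring).
    rewrite Rplus_opp_r, exp_0. ring.
Qed.

Lemma sum_n_derangement_gap_integrand N t : t <> 1 ->
  sum_n (fun n => exp (-1) * (t ^ n * exp (- t))) N
  = exp (-1) * derangement_egf t * (1 - t ^ S N).
Proof.
  intros Ht. rewrite sum_n_Reals.
  rewrite (sum_eq _ (fun n => t ^ n * (exp (-1) * exp (- t)))) by (intros; ring).
  rewrite <- scal_sum, tech3 by exact Ht.
  change (exp (-1) * exp (- t) * ((1 - t ^ S N) / (1 - t))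
          = exp (-1) * (exp (- t) / (1 - t)) * (1 - t ^ S N)).
  field. lra.
Qed.

Lemma derangement_gap_integrand_error N t : -1 <= t <= 0 ->
  Rabs (exp (-1) * derangement_egf t - sum_n (fun n => exp (-1) * (t ^ n * exp (- t))) N)
  <= 3 * (- t) ^ S N.
Proof.
  intros Ht. rewrite sum_n_derangement_gap_integrand by lra.
  replace (exp (-1) * derangement_egf t - exp (-1) * derangement_egf t * (1 - t ^ S N))
    with (exp (-1) * (derangement_egf t * t ^ S N)) by ring.
  assert (He : 0 < exp (-1) <= 1).
  { split; [apply exp_pos|]. rewrite <- exp_0. left. apply exp_increasing. lra. }
  rewrite !Rabs_mult, (Rabs_pos_eq (exp (-1))) by lra.
  rewrite <- RPow_abs, (Rabs_left1 t) by lra.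
  assert (Hp : 0 <= (- t) ^ S N) by (apply pow_le; lra).
  assert (Hbound : Rabs (derangement_egf t) * (- t) ^ S N <= 3 * (- t) ^ S N)
    by (apply Rmult_le_compat_r; [exact Hp | exact (Rabs_derangement_egf_le t Ht)]).
  pose proof (Rmult_le_pos _ _ (Rabs_pos (derangement_egf t)) Hp).
  nra.
Qed.

(** * The second series *)

Definition derangement_egf_partial (N : nat) (t : R) : R :=
  sum_n (fun n => derangement n / INR (Factorial.fact n) * t ^ n) N.

Lemma one_sub_mul_derangement_egf_partial N t :
  (1 - t) * derangement_egf_partial N t = exp_taylor (- t) N - exp_taylor (-1) N * t ^ S N.
Proof.
  unfold derangement_egf_partial. rewrite sum_n_Reals.
  induction N as [|N IH].
  - unfold exp_taylor, derangement. simpl. field.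
  - cbn [sum_f_R0]. rewrite Rmult_plus_distr_l, IH, derangement_exp_taylor.
    unfold exp_taylor. cbn [sum_f_R0]. fold (exp_taylor (-1) N) (exp_taylor (- t) N).
    replace ((- t) ^ S N) with ((-1) ^ S N * t ^ S N)
      by (rewrite <- Rpow_mult_distr; f_equal; ring).
    assert (Hf := INR_fact_neq_0 (S N)). cbn [pow]. field. exact Hf.
Qed.

Lemma is_RInt_derangement_egf_partial N :
  is_RInt (derangement_egf_partial N) 0 (-1)
    (sum_n (fun n => derangement n * (-1) ^ (n + 1) / INR (Factorial.fact (n + 1))) N).
Proof.
  apply (is_RInt_sum_n (fun n t => derangement n / INR (Factorial.fact n) * t ^ n)).
  intros n.
  replace (derangement n * (-1) ^ (n + 1) / INR (Factorial.fact (n + 1)))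
    with (derangement n / INR (Factorial.fact n) * ((-1) ^ S n / INR (S n))).
  - exact (is_RInt_scal _ _ _ _ _ (is_RInt_pow (-1) n)).
  - rewrite Nat.add_1_r, fact_simpl, mult_INR.
    assert (Hf := INR_fact_neq_0 n).
    assert (Hs : INR (S n) <> 0) by (apply not_0_INR; discriminate).
    field. split; assumption.
Qed.

Lemma Rabs_exp_taylor_opp1_le N : Rabs (exp_taylor (-1) N) <= 10.
Proof.
  assert (H := exp_taylor_remainder_bound (-1) N).
  replace (Rabs (-1)) with 1 in H by (rewrite Rabs_left; lra).
  rewrite pow1 in H. specialize (H (Rle_refl 1)).
  assert (He : 0 < exp (-1) <= 1).
  { split; [apply exp_pos|]. rewrite <- exp_0. left. apply exp_increasing. lra. }
  unfold Rabs in *. repeat destruct Rcase_abs; lra.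
Qed.

Lemma derangement_egf_partial_error N t : -1 <= t <= 0 ->
  Rabs (derangement_egf t - derangement_egf_partial N t) <= 19 * (- t) ^ S N.
Proof.
  intros Ht.
  assert (Hinv : 0 < / (1 - t) <= 1).
  { split; [apply Rinv_0_lt_compat; lra|]. rewrite <- Rinv_1. apply Rinv_le_contravar; lra. }
  replace (derangement_egf t - derangement_egf_partial N t)
    with (((exp (- t) - exp_taylor (- t) N) + exp_taylor (-1) N * t ^ S N) * / (1 - t)).
  2:{ apply (Rmult_eq_reg_l (1 - t)); [|lra].
      rewrite Rmult_minus_distr_l, one_sub_mul_derangement_egf_partial.
      unfold derangement_egf. field. lra. }
  assert (Hpow : Rabs (t ^ S N) = (- t) ^ S N)
    by (rewrite <- RPow_abs, Rabs_left1 by lra; reflexivity).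
  assert (Hrem := exp_taylor_remainder_bound (- t) N).
  rewrite Rabs_Ropp, (Rabs_left1 t) in Hrem by lra. specialize (Hrem ltac:(lra)).
  assert (Hnum : Rabs ((exp (- t) - exp_taylor (- t) N) + exp_taylor (-1) N * t ^ S N)
                 <= 19 * (- t) ^ S N).
  { eapply Rle_trans; [apply Rabs_triang|]. rewrite Rabs_mult, Hpow.
    assert (Hp : 0 <= (- t) ^ S N) by (apply pow_le; lra).
    assert (H10 := Rmult_le_compat_r _ _ _ Hp (Rabs_exp_taylor_opp1_le N)).
    lra. }
  rewrite Rabs_mult, (Rabs_pos_eq (/ (1 - t))) by lra.
  pose proof (Rabs_pos ((exp (- t) - exp_taylor (- t) N) + exp_taylor (-1) N * t ^ S N)).
  nra.
Qed.

Theorem mainTheorem13 :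
  ex_RInt (fun t => exp (- t) / (1 - t)) 0 (-1) /\
  is_series (fun n => exp (-1) * INR (Factorial.fact n) - derangement n)
    (exp (-1) * RInt (fun t => exp (- t) / (1 - t)) 0 (-1)) /\
  is_series (fun n => derangement n * (-1) ^ (n + 1) / INR (Factorial.fact (n + 1)))
    (RInt (fun t => exp (- t) / (1 - t)) 0 (-1)).
Proof.
  split; [exact ex_RInt_derangement_egf|]. split.
  - assert (H := is_lim_seq_RInt_pow_error (fun t => exp (-1) * derangement_egf t)
                   _ _ 3 (ex_RInt_scal _ _ _ (exp (-1)) ex_RInt_derangement_egf)
                   (is_RInt_sum_n _ _ _ _ is_RInt_derangement_gap)
                   derangement_gap_integrand_error).
    replace (RInt (fun t => exp (-1) * derangement_egf t) 0 (-1))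
      with (exp (-1) * RInt derangement_egf 0 (-1)) in H
      by (symmetry; exact (RInt_scal _ _ _ _ ex_RInt_derangement_egf)).
    exact H.
  - exact (is_lim_seq_RInt_pow_error derangement_egf _ _ 19 ex_RInt_derangement_egf
             is_RInt_derangement_egf_partial derangement_egf_partial_error).
Qed.
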